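(* Let $Z\in\{0,1\}$ and $S(1),S(0)\in\{0,1\}$ be random variables with $Z\perp\!\!\!\perp \{S(1),S(0),\mathbf{X}\}$, where $\mathbf{X}$ is a covariate vector, and let $S=S(Z)$. Let $p_1=\Pr(S=1\mid Z=1)$ and $p_0=\Pr(S=1\mid Z=0)$, and assume $p_1\ge p_0$. Suppose there is a constant $\xi$ with $0\le \xi<1$ such that $\xi = \Pr(U=\bar{s}s\mid\mathbf{X})/\Pr(U=s\bar{s}\mid\mathbf{X})$. Then $$\pi_{s\bar{s}} = \frac{p_1-p_0}{1-\xi},\quad \pi_{\bar{s}\bar{s}} = 1-p_0-\frac{p_1-p_0}{1-\xi},\quad \pi_{ss} = p_1 - \frac{p_1-p_0}{1-\xi},\quad \pi_{\bar{s}s} = \frac{\xi(p_1-p_0)}{1-\xi},$$ and consequently $$0\le \xi\le 1-\frac{p_1-p_0}{\min(p_1,1-p_0)}\le 1.$$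
   Context: The principal stratum is $U=(S(1),S(0))$, whose values $(1,1),(1,0),(0,1),(0,0)$ are labelled $ss, s\bar{s}, \bar{s}s, \bar{s}\bar{s}$; $\pi_u=\Pr(U=u)$. No monotonicity assumption is made. Conditioning events and denominators (including $\Pr(U=s\bar{s}\mid\mathbf{X})$ and $\min(p_1,1-p_0)$) are assumed positive. *)

From HB Require Import structures.
From mathcomp Require Import all_boot all_order all_algebra.
From mathcomp Require Import all_classical all_reals all_analysis.
Set Implicit Arguments. Unset Strict Implicit. Unset Printing Implicit Defensive.
Import Order.TTheory GRing.Theory Num.Theory.
Local Open Scope classical_set_scope.
Local Open Scope ring_scope.

Definition prob {R : realType} {d : measure_display} {T : measurableType d}
  (P : probability T R) (A : set T) : R := fine (P A).

Definition cprob {R : realType} {d : measure_display} {T : measurableType d}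
  (P : probability T R) (A B : set T) : R := prob P (A `&` B) / prob P B.

Definition stratum {T : Type} (S1 S0 : T -> bool) (a b : bool) : set T :=
  [set w | S1 w = a /\ S0 w = b].

Definition Sobs {T : Type} (Z S1 S0 : T -> bool) : T -> bool :=
  fun w => if Z w then S1 w else S0 w.

From HB Require Import structures.
From mathcomp Require Import all_boot all_order all_algebra.
From mathcomp Require Import all_classical all_reals all_analysis.
From mathcomp Require Import ring lra.
Import Order.TTheory GRing.Theory Num.Theory.
Local Open Scope classical_set_scope.
Local Open Scope ring_scope.

(* Only the marginal (X-free) content of the hypotheses is needed.  Under
   randomization, Pr(S = 1 | Z = 1) = pi_{ss} + pi_{s sbar} and
   Pr(S = 1 | Z = 0) = pi_{ss} + pi_{sbar s}; together with pi_{sbar s} =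
   xi pi_{s sbar} and the four strata summing to one, this is a linear system
   whose solution is the displayed one, since p1 - p0 = (1 - xi) pi_{s sbar}.
   The bound on xi follows from pi_{s sbar} <= min(p1, 1 - p0). *)

Section Probability.
Context {R : realType} {d : measure_display} {T : measurableType d}.
Variable P : probability T R.

Lemma prob_ge0 (A : set T) : 0 <= prob P A.
Proof. exact/fine_ge0/measure_ge0. Qed.

Lemma probT : prob P setT = 1.
Proof. by rewrite /prob probability_setT. Qed.

Lemma probU (A B : set T) : measurable A -> measurable B ->
  A `&` B = set0 -> prob P (A `|` B) = prob P A + prob P B.
Proof.
move=> mA mB AB; rewrite /prob measureU // fineD //; exact: fin_num_measure.
Qed.

End Probability.

Section PrincipalStrata.
Context {R : realType} {d : measure_display} {T : measurableType d}.
Variable P : probability T R.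
Context {Z S1 S0 : T -> bool}.
Hypothesis mZ : forall b : bool, measurable [set w | Z w = b].
Hypothesis mS1 : forall b : bool, measurable [set w | S1 w = b].
Hypothesis mS0 : forall b : bool, measurable [set w | S0 w = b].

Local Notation U := (stratum S1 S0).

Lemma measurable_stratum a b : measurable (U a b).
Proof. exact: (measurableI _ _ (mS1 a) (mS0 b)). Qed.

Lemma sum_prob_strata :
  prob P (U true false) + prob P (U true true)
  + (prob P (U false true) + prob P (U false false)) = 1.
Proof.
have partition : setT = (U true false `|` U true true)
                        `|` (U false true `|` U false false).
  apply/seteqP; split => w //= _; rewrite /stratum /=.
  by case: (S1 w); case: (S0 w); intuition.
rewrite -(probT P) partition.
have disj a b a' b' : (a, b) != (a', b') -> U a b `&` U a' b' = set0.
  move=> neq; apply/seteqP; split => w // -[[ha hb] [ha' hb']].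
  by move: neq; rewrite -ha -hb -ha' -hb' eqxx.
have mU a b a' b' : measurable (U a b `|` U a' b').
  exact: measurableU (measurable_stratum _ _) (measurable_stratum _ _).
rewrite !probU ?disj //; try exact: mU; try exact: measurable_stratum.
by rewrite setIUl !setIUr !disj // !setU0.
Qed.

Hypothesis indep : forall z a b : bool,
  prob P ([set w | Z w = z] `&` U a b) =
  prob P [set w | Z w = z] * prob P (U a b).

Lemma cprob_selected (z : bool) : 0 < prob P [set w | Z w = z] ->
  cprob P [set w | Sobs Z S1 S0 w = true] [set w | Z w = z] =
  prob P (U true (~~ z)) + prob P (U z true).
Proof.
rewrite /cprob.
have -> : [set w | Sobs Z S1 S0 w = true] `&` [set w | Z w = z] =
    ([set w | Z w = z] `&` U true (~~ z)) `|` ([set w | Z w = z] `&` U z true).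
  apply/seteqP; split => w /=; rewrite /Sobs /stratum /=;
    case: z; case: (Z w); case: (S1 w); case: (S0 w); intuition.
move/lt0r_neq0=> pz_neq0; rewrite probU; last 3 first.
- exact: measurableI (mZ z) (measurable_stratum _ _).
- exact: measurableI (mZ z) (measurable_stratum _ _).
- apply/seteqP; split => w // -[[_ [h1 h2]] [_ [h3 h4]]].
  by case: z h2 h3 h4 {pz_neq0} => /=; congruence.
by rewrite !indep -mulrDr mulrC mulKf.
Qed.

End PrincipalStrata.

Section LinearSystem.
Context {R : realFieldType} {xi p1 p0 a b c e : R}.
Hypotheses (xi_lt1 : xi < 1) (c_ratio : c = xi * a).
Hypotheses (p1E : p1 = a + b) (p0E : p0 = b + c).

Lemma selection_gap : p1 - p0 = (1 - xi) * a.
Proof. by rewrite p1E p0E c_ratio; ring. Qed.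

Lemma solve_strata : a + b + (c + e) = 1 ->
  [/\ a = (p1 - p0) / (1 - xi),
      e = 1 - p0 - (p1 - p0) / (1 - xi),
      b = p1 - (p1 - p0) / (1 - xi)
    & c = xi * (p1 - p0) / (1 - xi)].
Proof.
move=> total.
have a_solved : (p1 - p0) / (1 - xi) = a.
  by rewrite selection_gap mulrC mulKf // subr_eq0 gt_eqF.
by rewrite -mulrA a_solved p1E p0E; split => //; lra.
Qed.

Lemma ratio_bounds : 0 <= xi -> 0 <= a -> 0 <= b -> 0 <= e ->
  a + b + (c + e) = 1 -> 0 < Num.min p1 (1 - p0) ->
  xi <= 1 - (p1 - p0) / Num.min p1 (1 - p0) /\
  1 - (p1 - p0) / Num.min p1 (1 - p0) <= 1.
Proof.
move=> xi_ge0 a_ge0 b_ge0 e_ge0 total.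
set m := Num.min p1 (1 - p0) => m_gt0.
have a_le_m : a <= m by rewrite le_min p1E p0E; apply/andP; split; lra.
have share_le1 : a / m <= 1 by rewrite ler_pdivrMr // mul1r.
have share_ge0 : 0 <= a / m by rewrite divr_ge0 // ltW.
have one_subxi_ge0 : 0 <= 1 - xi by rewrite subr_ge0 ltW.
have := ler_piMr one_subxi_ge0 share_le1.
have := mulr_ge0 one_subxi_ge0 share_ge0.
rewrite selection_gap -mulrA; split; lra.
Qed.

End LinearSystem.

Theorem proposition5 (R : realType) (d : measure_display) (T : measurableType d)
  (P : probability T R) (dx : measure_display) (TX : measurableType dx)
  (Z S1 S0 : T -> bool) (X : T -> TX) (xi : R)
  (* measurability of the random variables *)
  (mZ : forall b : bool, measurable [set w | Z w = b])
  (mS1 : forall b : bool, measurable [set w | S1 w = b])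
  (mS0 : forall b : bool, measurable [set w | S0 w = b])
  (mX : measurable_fun setT X)
  (* Z independent of (S(1), S(0), X) *)
  (indep : forall (z a b : bool) (B : set TX), measurable B ->
     prob P ([set w | Z w = z] `&` (stratum S1 S0 a b `&` (X @^-1` B))) =
     prob P [set w | Z w = z] * prob P (stratum S1 S0 a b `&` (X @^-1` B)))
  (* conditioning events have positive probability *)
  (pZ1 : 0 < prob P [set w | Z w = true])
  (pZ0 : 0 < prob P [set w | Z w = false])
  (* p1 >= p0 *)
  (p1_ge_p0 : cprob P [set w | Sobs Z S1 S0 w = true] [set w | Z w = false]
           <= cprob P [set w | Sobs Z S1 S0 w = true] [set w | Z w = true])
  (* Pr(U = s sbar | X) > 0 a.s. *)
  (pos_ssbar : forall B : set TX, measurable B -> 0 < prob P (X @^-1` B) ->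
     0 < prob P (stratum S1 S0 true false `&` (X @^-1` B)))
  (* Pr(U = sbar s | X) = xi * Pr(U = s sbar | X) a.s. *)
  (ratio : forall B : set TX, measurable B ->
     prob P (stratum S1 S0 false true `&` (X @^-1` B)) =
     xi * prob P (stratum S1 S0 true false `&` (X @^-1` B)))
  (xi_ge0 : 0 <= xi) (xi_lt1 : xi < 1)
  (min_pos : 0 < Num.min
       (cprob P [set w | Sobs Z S1 S0 w = true] [set w | Z w = true])
       (1 - cprob P [set w | Sobs Z S1 S0 w = true] [set w | Z w = false])) :
  let p1 := cprob P [set w | Sobs Z S1 S0 w = true] [set w | Z w = true] in
  let p0 := cprob P [set w | Sobs Z S1 S0 w = true] [set w | Z w = false] in
  [/\ prob P (stratum S1 S0 true false) = (p1 - p0) / (1 - xi),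
      prob P (stratum S1 S0 false false) = 1 - p0 - (p1 - p0) / (1 - xi),
      prob P (stratum S1 S0 true true) = p1 - (p1 - p0) / (1 - xi),
      prob P (stratum S1 S0 false true) = xi * (p1 - p0) / (1 - xi)
    & 0 <= xi /\ xi <= 1 - (p1 - p0) / Num.min p1 (1 - p0)
      /\ 1 - (p1 - p0) / Num.min p1 (1 - p0) <= 1].
Proof.
move=> p1 p0.
have indep_strata z a b : prob P ([set w | Z w = z] `&` stratum S1 S0 a b) =
    prob P [set w | Z w = z] * prob P (stratum S1 S0 a b).
  by have := indep z a b _ measurableT; rewrite preimage_setT !setIT.
have c_ratio : prob P (stratum S1 S0 false true) =
    xi * prob P (stratum S1 S0 true false).
  by have := ratio _ measurableT; rewrite preimage_setT !setIT.
have p1E := cprob_selected P mZ mS1 mS0 indep_strata true pZ1.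
have p0E := cprob_selected P mZ mS1 mS0 indep_strata false pZ0.
have total := sum_prob_strata P mS1 mS0.
have [ssbar_E sbarsbar_E ss_E sbars_E] :=
  solve_strata xi_lt1 c_ratio p1E p0E total.
have [xi_le_bound bound_le1] := ratio_bounds xi_lt1 c_ratio p1E p0E xi_ge0
  (prob_ge0 _ _) (prob_ge0 _ _) (prob_ge0 _ _) total min_pos.
by split.
Qed.
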